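(* Let $\mathbb{F}^E_m$ be a floating-point format and $\mathrm{fl}:\mathbb{R}\to\mathbb{F}^E_m\cup\{-\infty,+\infty\}$ its rounding function in round-to-nearest-even mode. For any integer $\ell\in[0,2^{E-1}-2]$, the ratio $|\{\mathrm{fl}(i/2^\ell):i\in\{0,1,\ldots,2^\ell-1\}\}|\,/\,|\mathbb{F}^E_m\cap[0,1]|$ equals $\frac{2^\ell}{2^m(2^{E-1}-1)+1}$ if $\ell\le m+1$, and $\frac{2^m(\ell-m+1)+1}{2^m(2^{E-1}-1)+1}$ if $\ell>m+1$. The same holds for the set $\{\mathrm{fl}(\mathrm{fl}(i)/\mathrm{fl}(2^\ell)):i\in\{0,1,\ldots,2^\ell-1\}\}$.
   Context: $\mathbb{F}^E_m$ ($E\ge1$ exponent bits, $m\ge1$ mantissa bits, bias $b_E=2^{E-1}-1$) is regarded as a set of real numbers: with $e\in\{0,\dots,2^E-2\}$ and $f_1,\ldots,f_m\in\{0,1\}$, the finite values are $\pm(0.f_1\ldots f_m)_2\,2^{1-b_E}$ (for $e=0$, subnormals and zero) and $\pm(1.f_1\ldots f_m)_2\,2^{e-b_E}$ (for $1\le e\le 2^E-2$); $\mathbb{F}^E_m\cap[0,1]$ is the set of such values in $[0,1]$ (zero counted once). Round-to-nearest-even maps a real to the nearest element of $\mathbb{F}^E_m$, breaking ties toward the value with even last mantissa bit. *)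

From HB Require Import structures.
From mathcomp Require Import all_boot all_order all_algebra.
From mathcomp Require Import reals constructive_ereal.
Unset Printing Implicit Defensive.
Import Order.TTheory GRing.Theory Num.Theory.
Local Open Scope ring_scope.

Definition bias (E : nat) : nat := (2 ^ (E - 1) - 1)%N.

(* an encoding (sign s, biased exponent e, mantissa field f), where
   f = (f_1 ... f_m)_2 is the integer whose binary digits are the mantissa bits *)
Definition frep := (bool * nat * nat)%type.

(* all encodings of finite values: e in {0,...,2^E-2}, f in {0,...,2^m-1} *)
Definition reps (E m : nat) : seq frep :=
  [seq (se.1, se.2, f) | se <- [seq (s, e) | s <- [:: false; true], e <- iota 0 (2 ^ E - 1)],
                         f <- iota 0 (2 ^ m)].

Definition fval (R : realType) (E m : nat) (r : frep) : R :=
  let: (s, e, f) := r in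
  (-1) ^+ s *
  (if e == 0%N then (f%:R / 2 ^+ m) * 2 / 2 ^+ bias E            (* (0.f)_2 2^(1-b) *)
   else (1 + f%:R / 2 ^+ m) * 2 ^+ e / 2 ^+ bias E).              (* (1.f)_2 2^(e-b) *)

Definition fmt (R : realType) (E m : nat) : seq R := [seq fval R E m r | r <- reps E m].

Definition fmt01 (R : realType) (E m : nat) : seq R :=
  undup [seq x <- fmt R E m | (0 <= x) && (x <= 1)].

Definition even_last (r : frep) : bool := ~~ odd r.2.

Definition rne_ok (R : realType) (E m : nat) (x : R) (r : frep) : bool :=
  all (fun r' => `|x - fval R E m r| <= `|x - fval R E m r'|) (reps E m) &&
  all (fun r' => (`|x - fval R E m r'| == `|x - fval R E m r|) ==>
                   ((fval R E m r' == fval R E m r) || even_last r)) (reps E m).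

(* IEEE overflow threshold for round-to-nearest: (2 - 2^(-m-1)) * 2^emax, emax = b_E *)
Definition ovf_thr (R : realType) (E m : nat) : R :=
  (2 - 2 ^- m.+1) * 2 ^+ bias E.

Definition fl (R : realType) (E m : nat) (x : R) : \bar R :=
  if ovf_thr R E m <= x then +oo%E
  else if x <= - ovf_thr R E m then -oo%E
  else let rs := reps E m in
       let i := find (rne_ok R E m x) rs in
       if (i < size rs)%N then (fval R E m (nth (false, 0%N, 0%N) rs i))%:E
       else +oo%E.

(* floating-point division: fl of the exact quotient of finite operands.
   (Non-finite operands never occur in the statement; they get an arbitrary value.) *)
Definition fdiv (R : realType) (E m : nat) (a b : \bar R) : \bar R :=
  match a, b with
  | EFin x, EFin y => fl R E m (x / y)
  | _, _ => +oo%E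
  end.

(* Multiplying by 2^(m + b - 1), where b is the bias, maps the nonnegative
   floats increasingly onto a set of integers, enumerated by [grid m]; the
   floats in [0, 1] are the [grid m j] with j <= b 2^m, so there are
   b 2^m + 1 of them.  Below the overflow threshold, fl becomes
   round-to-nearest-even on this integer grid ([rne m]).  Above 2^m the grid
   is self-similar (adding 2^m to the index doubles the value), so rounding
   commutes with multiplication by powers of two and fl (i / 2^l) = rne i / 2^l;
   as moreover fl i = rne i and fl 2^l = 2^l, fl (fl i / fl 2^l) is the same
   value.  For i < 2^l, rne i = i when l <= m + 1.  When l >= m + 2 the values
   rne i are exactly the grid points of [0, 2^l]: a grid point below 2^l is
   the image of itself, and 2^l is the image of 2^l - 1, which is at distance 1
   from 2^l and at distance at least 1 from the grid point below it (a tie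
   exactly when l = m + 2, broken towards 2^l, whose index is even).  There are
   2^m (l - m + 1) + 1 such points. *)

From HB Require Import structures.
From mathcomp Require Import all_boot all_order all_algebra.
From mathcomp Require Import reals constructive_ereal.
From mathcomp Require Import zify ring lra.

Set Implicit Arguments.
Unset Strict Implicit.
Unset Printing Implicit Defensive.

Import Order.TTheory GRing.Theory Num.Theory.

Lemma distnMr k a b : `|a * k - b * k| = `|a - b| * k.
Proof. by rewrite !PoszM -mulrBl abszM absz_nat. Qed.

Section Grid.

Variable m : nat.

Let expn2_gt0 k : 0 < 2 ^ k. Proof. by rewrite expn_gt0. Qed.

(* The nonnegative float with exponent field [j %/ 2 ^ m] and mantissa field
   [j %% 2 ^ m], scaled to an integer; no upper bound is put on the exponent. *)
Definition grid (j : nat) : nat :=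
  let e := j %/ 2 ^ m in let f := j %% 2 ^ m in
  if e == 0 then f else (2 ^ m + f) * 2 ^ e.-1.

Lemma gridE e f : f < 2 ^ m ->
  grid (e * 2 ^ m + f) = if e == 0 then f else (2 ^ m + f) * 2 ^ e.-1.
Proof.
by move=> lt_f; rewrite /grid divnMDl // modnMDl divn_small // modn_small // addn0.
Qed.

Lemma grid_small j : j < 2 ^ m.+1 -> grid j = j.
Proof.
move=> lt_j; case: (ltnP j (2 ^ m)) => [lt_jm | le_mj].
  by rewrite [in LHS](_ : j = 0 * 2 ^ m + j) ?gridE.
rewrite expnS in lt_j.
rewrite [in LHS](_ : j = 1 * 2 ^ m + (j - 2 ^ m)) ?gridE /=; lia.
Qed.

Lemma grid_ltS j : grid j < grid j.+1.
Proof.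
rewrite (divn_eq j (2 ^ m)); have := ltn_pmod j (expn2_gt0 m).
move: (j %/ 2 ^ m) (j %% 2 ^ m) => e f lt_f.
case: (ltnP f.+1 (2 ^ m)) => [lt_f1 | le_f1].
  by rewrite -addnS !gridE //; case: eqP => // _; rewrite ltn_pmul2r ?addnS.
have -> : (e * 2 ^ m + f).+1 = e.+1 * 2 ^ m + 0 by rewrite mulSn; lia.
rewrite !gridE //=; case: e => [|e] /=; first by rewrite expn0; lia.
by rewrite expnS; nia.
Qed.

Lemma grid_leq : {mono grid : i j / i <= j}.
Proof. exact/leq_mono/(homo_ltn ltn_trans grid_ltS). Qed.

Lemma grid_ltn : {mono grid : i j / i < j}.
Proof. exact/leqW_mono/grid_leq. Qed.

Lemma grid_inj : injective grid.
Proof. exact/incn_inj/grid_leq. Qed.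

Lemma grid_gt X : X < grid X.+1.
Proof.
by elim: X => [|X IH]; apply: leq_ltn_trans (grid_ltS _).
Qed.

Lemma grid_shift j t : 2 ^ m <= j -> grid (j + t * 2 ^ m) = 2 ^ t * grid j.
Proof.
rewrite (divn_eq j (2 ^ m)); have := ltn_pmod j (expn2_gt0 m).
move: (j %/ 2 ^ m) (j %% 2 ^ m) => [|e] f lt_f le_mj; first by move: le_mj; lia.
by rewrite addnAC -mulnDl !gridE // addSn /= expnD; ring.
Qed.

Lemma grid_double j : exists j', grid j' = grid j * 2.
Proof.
case: (ltnP j (2 ^ m)) => [lt_jm | le_mj].
  by exists (j * 2); rewrite !grid_small // expnS; lia.
by exists (j + 2 ^ m); rewrite -[2 ^ m]mul1n grid_shift // mulnC.
Qed.

Lemma grid_mulX j t : exists j', grid j' = grid j * 2 ^ t.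
Proof.
elim: t => [|t [j1 j1E]]; first by exists j; rewrite muln1.
by have [j2 j2E] := grid_double j1; exists j2; rewrite j2E j1E expnS; ring.
Qed.

Lemma grid_expm : grid (2 ^ m) = 2 ^ m.
Proof. by rewrite grid_small // ltn_exp2l. Qed.

Lemma grid_expn e : 0 < e -> grid (e * 2 ^ m) = 2 ^ (m + e.-1).
Proof. by move=> e_gt0; rewrite -[_ * _]addn0 gridE // eqn0Ngt e_gt0 addn0 expnD. Qed.

(* Besides being nearest, [grid c] beats any other equally near grid point by
   parity: the two candidates of a tie have consecutive indices.  This makes the
   rounding unique ([rne_nearest]). *)
Definition nearest_even (X c : nat) : Prop :=
  (forall j, `|X - grid c| <= `|X - grid j|) /\
  (forall j, `|X - grid j| = `|X - grid c| -> grid j = grid c \/ odd j && ~~ odd c).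

Definition next_index (X : nat) : nat :=
  ex_minn (ex_intro (fun k => X < grid k) X.+1 (grid_gt X)).

Definition rne_index (X : nat) : nat :=
  let k := next_index X in
  if X - grid k.-1 < grid k - X then k.-1
  else if grid k - X < X - grid k.-1 then k
  else if odd k then k.-1 else k.

Definition rne (X : nat) : nat := grid (rne_index X).

Lemma next_indexP X : 0 < next_index X /\ grid (next_index X).-1 <= X < grid (next_index X).
Proof.
rewrite /next_index; case: ex_minnP => k lt_Xk min_k.
have k_gt0 : 0 < k by case: k lt_Xk {min_k} => //; rewrite grid_small ?expn_gt0.
by split=> //; rewrite lt_Xk andbT leqNgt; apply/negP => /min_k; lia.
Qed.

Lemma next_index_eq X k : 0 < k -> grid k.-1 <= X < grid k -> next_index X = k.
Proof.
move=> k_gt0 /andP [lo_X X_hi]; have [n_gt0 /andP [lo_n n_hi]] := next_indexP X.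
apply/eqP; rewrite eqn_leq; apply/andP; split.
  by move: X_hi; rewrite /next_index; case: ex_minnP => n _; apply.
by have := leq_ltn_trans lo_X n_hi; rewrite grid_ltn; lia.
Qed.

Lemma rne_indexP X : nearest_even X (rne_index X).
Proof.
have [k_gt0 /andP [lo_X X_hi]] := next_indexP X.
rewrite /rne_index; set k := next_index X in k_gt0 lo_X X_hi *.
set lo := grid k.-1 in lo_X *; set hi := grid k in X_hi *.
have dist_lo : `|X - lo| = X - lo by lia.
have dist_hi : `|X - hi| = hi - X by lia.
have far j : j != k.-1 -> j != k -> minn (X - lo) (hi - X) < `|X - grid j|.
  move=> ne_lo ne_hi; case: (ltnP j k) => [lt_jk | le_kj].
    have : grid j < lo by rewrite /lo grid_ltn; lia.
    lia.
  have : hi < grid j by rewrite /hi grid_ltn; lia.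
  lia.
have odd_k : odd k = ~~ odd k.-1 by rewrite -{1}(prednK k_gt0).
suff nearest c : c = k.-1 \/ c = k -> `|X - grid c| = minn (X - lo) (hi - X) ->
    (X - lo = hi - X -> ~~ odd c) -> nearest_even X c.
  case: ifP => h1; [|case: ifP => h2; [|case: ifP => h3]]; apply: nearest;
    rewrite ?dist_lo ?dist_hi ?odd_k ?h3; by [left | right | lia].
move=> c_k d_c tie_c; split=> j.
  rewrite d_c; case: (eqVneq j k.-1) => [-> | ne_lo]; first lia.
  by case: (eqVneq j k) => [-> | ne_hi]; [lia | exact/ltnW/far].
have [-> | ne_lo] := eqVneq j k.-1.
  case: c_k d_c tie_c => -> d_c tie_c eq_d; first by left.
  by right; move: (tie_c ltac:(lia)); rewrite odd_k !negbK andbb.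
have [-> | ne_hi] := eqVneq j k.
  case: c_k d_c tie_c => -> d_c tie_c eq_d; last by left.
  by right; move: (tie_c ltac:(lia)); rewrite odd_k andbb.
by rewrite d_c => eq_d; have := far j ne_lo ne_hi; lia.
Qed.

Lemma rne_nearest X c : nearest_even X c -> rne X = grid c.
Proof.
have [near_r tie_r] := rne_indexP X; move=> [near_c tie_c].
have eq_d : `|X - grid c| = `|X - rne X| by apply/eqP; rewrite eqn_leq near_c near_r.
case: (tie_r _ eq_d) => [-> // | /andP [_ even_r]].
by case: (tie_c _ (esym eq_d)) => [// | /andP [odd_r _]]; rewrite odd_r in even_r.
Qed.

Lemma rne_exact j : rne (grid j) = grid j.
Proof.
apply: rne_nearest; split=> [i | i]; first by rewrite distnn.
by rewrite distnn => /eqP; rewrite distn_eq0 => /eqP ->; left.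
Qed.

Lemma rne_idem X : rne (rne X) = rne X.
Proof. exact: rne_exact. Qed.

Lemma rne_le X k : X <= grid k -> rne X <= grid k.
Proof. by have [near _] := rne_indexP X; have := near k; rewrite -/(rne X); lia. Qed.

Lemma rne_ge X k : grid k <= X -> grid k <= rne X.
Proof. by have [near _] := rne_indexP X; have := near k; rewrite -/(rne X); lia. Qed.

Lemma rne_small X : X < 2 ^ m.+1 -> rne X = X.
Proof. by move=> lt_X; rewrite -{1}(grid_small lt_X) rne_exact grid_small. Qed.

Lemma undup_rne_small l : l <= m.+1 ->
  undup [seq rne i | i <- iota 0 (2 ^ l)] = iota 0 (2 ^ l).
Proof.
move=> le_lm; rewrite -{2}(undup_id (iota_uniq 0 (2 ^ l))) -{2}(map_id (iota 0 _)).
congr undup; apply/eq_in_map => i; rewrite mem_iota => /andP [_ lt_i].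
by rewrite rne_small // (leq_trans lt_i) // leq_exp2l.
Qed.

Hypothesis m_gt0 : 0 < m.

Lemma odd_addMX j s : odd (j + s * 2 ^ m) = odd j.
Proof. by rewrite oddD oddM oddX; case: m m_gt0 => //= n _; rewrite andbF addbF. Qed.

Lemma odd_modX j : odd (j %% 2 ^ m) = odd j.
Proof. by rewrite {2}(divn_eq j (2 ^ m)) addnC odd_addMX. Qed.

Lemma nearest_even_mulX X s c : 2 ^ m <= X -> nearest_even X c ->
  nearest_even (X * 2 ^ s) (c + s * 2 ^ m).
Proof.
move=> le_mX [near tie].
have le_mc : 2 ^ m <= c.
  by rewrite -grid_leq grid_expm; have := near (2 ^ m); rewrite grid_expm; lia.
have dist_shift j : 2 ^ m <= j ->
    `|X * 2 ^ s - grid (j + s * 2 ^ m)| = `|X - grid j| * 2 ^ s.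
  by move=> le_mj; rewrite grid_shift // [2 ^ s * _]mulnC distnMr.
have low j : j < 2 ^ m + s * 2 ^ m -> `|X - grid c| * 2 ^ s < `|X * 2 ^ s - grid j|.
  rewrite -grid_ltn -{1}[2 ^ m]add0n grid_shift ?grid_expm // => lt_j.
  have := near (2 ^ m); rewrite grid_expm -(leq_pmul2r (expn2_gt0 s)) => le_d.
  by apply: (leq_ltn_trans le_d); rewrite mulnC; nia.
split=> j; rewrite dist_shift //.
  have [le_j | lt_j] := leqP (2 ^ m + s * 2 ^ m) j; last exact/ltnW/low.
  have -> : j = (j - s * 2 ^ m) + s * 2 ^ m by lia.
  by rewrite dist_shift ?leq_mul2r ?near ?orbT //; lia.
have [le_j | lt_j] := leqP (2 ^ m + s * 2 ^ m) j; last by have := low j lt_j; lia.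
have -> : j = (j - s * 2 ^ m) + s * 2 ^ m by lia.
rewrite dist_shift; last by lia.
move/eqP; rewrite eqn_pmul2r // => /eqP/tie [eq_g | odd_j].
  by left; rewrite !grid_shift ?eq_g //; lia.
by right; rewrite !odd_addMX.
Qed.

Lemma rne_mulX X s : rne (X * 2 ^ s) = rne X * 2 ^ s.
Proof.
case: (ltnP X (2 ^ m)) => [lt_Xm | le_mX].
  have gridX : grid X = X by rewrite grid_small // (leq_trans lt_Xm) // leq_exp2l.
  by rewrite -gridX rne_exact; have [j <-] := grid_mulX X s; rewrite rne_exact.
have le_mr : 2 ^ m <= rne_index X.
  by rewrite -grid_leq -/(rne X); apply: rne_ge; rewrite grid_expm.
by rewrite (rne_nearest (nearest_even_mulX s le_mX (rne_indexP X))) grid_shift // mulnC.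
Qed.

Lemma rne_expn l : rne (2 ^ l) = 2 ^ l.
Proof. by rewrite -[2 ^ l]mul1n rne_mulX rne_small // (ltn_exp2l 0). Qed.

Lemma rne_le_expn X l : X <= 2 ^ l -> rne X <= 2 ^ l.
Proof. by rewrite -{2}(rne_expn l) => le_X; apply: rne_le; rewrite -/(rne _) rne_expn. Qed.

Lemma rne_pred_expn l : m.+2 <= l -> rne (2 ^ l - 1) = 2 ^ l.
Proof.
move=> le_ml; set k := (l - m).+1 * 2 ^ m.
have k_gt0 : 0 < k by rewrite muln_gt0 expn_gt0.
have grid_k : grid k = 2 ^ l by rewrite grid_expn //=; congr (2 ^ _); lia.
have [u uE] : exists u, l - m = u.+2 by exists (l - m).-2; lia.
have grid_k1 : grid k.-1 = 2 ^ l - 2 ^ u.+1.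
  have -> : k.-1 = u.+2 * 2 ^ m + (2 ^ m).-1 by rewrite /k uE mulSn; lia.
  rewrite gridE ?prednK ?ltn_predL // -uE (_ : 2 ^ l = 2 ^ m * 2 ^ (l - m)).
    by rewrite uE !expnS /=; have := expn2_gt0 m; set A := 2 ^ m; set B := 2 ^ u; nia.
  by rewrite -expnD; congr (2 ^ _); lia.
have odd_k : odd k = false by rewrite -[k]add0n odd_addMX.
rewrite /rne /rne_index (next_index_eq k_gt0); last by rewrite grid_k grid_k1 expnS; lia.
have : 2 ^ u.+1 < 2 ^ l by rewrite ltn_exp2l; lia.
rewrite grid_k grid_k1 odd_k if_same expnS => lt_ul.
by case: ifP => [| _] //; have := expn2_gt0 u; lia.
Qed.

Lemma perm_undup_rne_large l : m.+2 <= l ->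
  perm_eq (undup [seq rne i | i <- iota 0 (2 ^ l)])
          [seq grid j | j <- iota 0 ((l - m).+1 * 2 ^ m).+1].
Proof.
move=> le_ml; set k := (l - m).+1 * 2 ^ m.
have grid_k : grid k = 2 ^ l by rewrite grid_expn //=; congr (2 ^ _); lia.
apply: uniq_perm; rewrite ?undup_uniq ?(map_inj_uniq grid_inj) ?iota_uniq // => y.
rewrite mem_undup; apply/mapP/mapP => [[i] | [j]]; rewrite mem_iota => /andP [_ lt_i] ->.
  exists (rne_index i); rewrite // mem_iota ltnS leq0n -grid_leq.
  by apply: rne_le; rewrite grid_k ltnW.
case: (ltnP j k) => [lt_jk | le_kj].
  exists (grid j); last by rewrite rne_exact.
  by rewrite mem_iota -grid_k grid_ltn.
exists (2 ^ l - 1); first by rewrite mem_iota /=; have := expn2_gt0 l; lia.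
by rewrite rne_pred_expn // (_ : j = k) //; lia.
Qed.

Lemma size_undup_rne l : size (undup [seq rne i | i <- iota 0 (2 ^ l)]) =
  if l <= m.+1 then 2 ^ l else 2 ^ m * (l - m + 1) + 1.
Proof.
case: ifP => [le_lm | /negbT]; first by rewrite undup_rne_small ?size_iota.
rewrite -ltnNge => lt_ml; rewrite (perm_size (perm_undup_rne_large lt_ml)).
by rewrite size_map size_iota !addn1 mulnC.
Qed.

End Grid.

Local Open Scope ring_scope.

Lemma normr_natB (R : numDomainType) (a b : nat) : `|a%:R - b%:R : R| = (`|a - b|%N)%:R.
Proof. by rewrite natr_absz intr_norm rmorphB. Qed.

Lemma natr_div_inj (R : numFieldType) (d : R) : d != 0 -> injective (fun n : nat => n%:R / d).
Proof. by move=> d_neq0 a b /(mulIf (invr_neq0 d_neq0))/eqP; rewrite eqr_nat => /eqP. Qed.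

Definition rep_of (m c : nat) : frep := (false, c %/ 2 ^ m, c %% 2 ^ m)%N.

Section Format.

Variables (R : realType) (E m : nat).
Hypotheses (m_gt0 : (0 < m)%N) (bias_gt0 : (0 < bias E)%N).

Local Notation scale := ((2 : R) ^+ (m + bias E - 1)).

Let scale_gt0 : 0 < scale. Proof. by rewrite exprn_gt0. Qed.

Lemma mem_reps r : (r \in reps E m) = (r.1.2 < 2 ^ E - 1)%N && (r.2 < 2 ^ m)%N.
Proof.
case: r => [[s e] f] /=; apply/allpairsP/andP.
  move=> [[[s' e'] f'] [se_in f_in [_ -> ->]]].
  case/allpairsP: se_in => [[s'' e'']] [_ e_in [_ ->]].
  by move: e_in f_in; rewrite /= !mem_iota !add0n => /andP [_ ->] /andP [_ ->].
move=> [lt_e lt_f]; exists (s, e, f); split; rewrite ?mem_iota //.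
apply/allpairsP; exists (s, e).
by split; rewrite ?mem_iota //; case: s.
Qed.

Lemma rep_of_in c : (c < (2 * bias E).+1 * 2 ^ m)%N -> rep_of m c \in reps E m.
Proof.
move=> lt_c; rewrite mem_reps /= ltn_mod expn_gt0 andbT.
have -> : (2 ^ E - 1 = (2 * bias E).+1)%N.
  move: bias_gt0; rewrite /bias; case: E => // E' _.
  by rewrite expnS subSS subn0; have := expn_gt0 2 E'; lia.
by rewrite ltn_divLR ?expn_gt0.
Qed.

Lemma fvalE s e f : (f < 2 ^ m)%N ->
  fval R E m (s, e, f) = (-1) ^+ s * (grid m (e * 2 ^ m + f))%:R / scale.
Proof.
move=> lt_f; rewrite /fval gridE //.
have scaleE : (2 : R) ^+ bias E = scale * 2 / 2 ^+ m.
  rewrite -exprSr (_ : (m + bias E - 1).+1 = m + bias E)%N; last by lia.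
  by rewrite exprD mulrAC mulfV ?mul1r // expf_neq0 // pnatr_eq0.
rewrite scaleE; case: e => [|e] /=; rewrite ?natrM ?natrD ?natrX ?exprS.
all: by field; rewrite ?expf_neq0 ?pnatr_eq0.
Qed.

Lemma fval_rep_of c : fval R E m (rep_of m c) = (grid m c)%:R / scale.
Proof. by rewrite fvalE ?ltn_mod ?expn_gt0 // -divn_eq expr0 mul1r. Qed.

Let ler_scaled a b : (a%:R / scale <= b%:R / scale) = (a <= b)%N.
Proof. by rewrite ler_pM2r ?invr_gt0 // ler_nat. Qed.

Let eqr_scaled a b : (a%:R / scale == b%:R / scale) = (a == b)%N.
Proof. by rewrite eq_le !ler_scaled -eqn_leq. Qed.

Lemma dist_fval X s e f : (f < 2 ^ m)%N ->
  `|X%:R / scale - fval R E m (s, e, f)| =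
  (if s then X + grid m (e * 2 ^ m + f) else `|X - grid m (e * 2 ^ m + f)|)%N%:R / scale.
Proof.
move=> lt_f; rewrite fvalE // -mulrBl normrM [`|scale^-1|]ger0_norm ?invr_ge0 ?ltW //.
congr (_ * _); case: s => /=; last by rewrite expr0 mul1r normr_natB.
by rewrite expr1 mulN1r opprK -natrD ger0_norm.
Qed.

Lemma dist_fval_rep_of X c :
  `|X%:R / scale - fval R E m (rep_of m c)| = (`|X - grid m c|)%:R / scale.
Proof. by rewrite /rep_of dist_fval ?ltn_mod ?expn_gt0 // -divn_eq. Qed.

Lemma fval_tie X s e f : (f < 2 ^ m)%N ->
  (if s then X + grid m (e * 2 ^ m + f) else `|X - grid m (e * 2 ^ m + f)|)%N =
    `|X - rne m X|%N ->
  fval R E m (s, e, f) = (rne m X)%:R / scale \/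
  odd (e * 2 ^ m + f) && ~~ odd (rne_index m X).
Proof.
have [near tie] := rne_indexP m X; rewrite -/(rne m X) in near tie *.
move=> lt_f; rewrite fvalE //; case: s => /= eq_d.
  have g0 : grid m 0 = 0%N by rewrite grid_small ?expn_gt0.
  have := near 0%N; rewrite g0 => le_dX.
  have [<- | /andP [] //] := tie 0%N ltac:(rewrite g0; lia).
  by left; rewrite g0 (_ : grid m _ = 0%N) ?mulr0 ?mul0r //; lia.
by case: (tie _ eq_d) => [-> | ->]; [left; rewrite expr0 mul1r | right].
Qed.

Lemma rne_index_lt X : (X < 2 ^ (m + 2 * bias E - 1))%N ->
  (rne_index m X < (2 * bias E).+1 * 2 ^ m)%N.
Proof.
move=> lt_X; have : (rne m X <= grid m (2 * bias E * 2 ^ m))%N.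
  by apply: rne_le; rewrite grid_expn ?muln_gt0 // ltnW //; congr (_ < 2 ^ _)%N: lt_X; lia.
by rewrite /rne grid_leq mulSn; lia.
Qed.

Lemma rne_ok_rep_of X : rne_ok R E m (X%:R / scale) (rep_of m (rne_index m X)).
Proof.
have [near _] := rne_indexP m X; rewrite -/(rne m X) in near.
apply/andP; split; apply/allP => -[[s e] f]; rewrite mem_reps => /andP [_ lt_f];
  rewrite /= in lt_f; rewrite dist_fval_rep_of dist_fval // -/(rne m X).
  rewrite ler_scaled; case: s; last exact: near.
  by have := near 0%N; rewrite grid_small ?expn_gt0 //; lia.
apply/implyP; rewrite eqr_scaled => /eqP/(fval_tie lt_f) [-> | /andP [_ even_c]].
  by rewrite fval_rep_of eqxx.
by rewrite /even_last /= odd_modX // even_c orbT.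
Qed.

Lemma rne_ok_fval X r : (X < 2 ^ (m + 2 * bias E - 1))%N -> r \in reps E m ->
  rne_ok R E m (X%:R / scale) r -> fval R E m r = (rne m X)%:R / scale.
Proof.
move=> lt_X r_in /andP [/allP near_r /allP tie_r].
have rc_in := rep_of_in (rne_index_lt lt_X).
have [/allP near_c _] := andP (rne_ok_rep_of X).
set rc := rep_of m (rne_index m X) in rc_in near_c *.
have eq_d : `|X%:R / scale - fval R E m r| = `|X%:R / scale - fval R E m rc|.
  by apply/le_anti; rewrite near_r ?near_c.
move: (tie_r _ rc_in); rewrite eq_d eqxx fval_rep_of /= => /orP [/eqP -> // | even_r].
move: r r_in even_r eq_d {near_r tie_r} => -[[s e] f]; rewrite mem_reps => /andP [_ lt_f].
rewrite /= in lt_f.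
rewrite dist_fval_rep_of dist_fval // => even_f /eqP; rewrite eqr_scaled.
move=> /eqP/(fval_tie lt_f) [// | /andP [odd_j _]].
by move: even_f; rewrite /even_last /= -(odd_addMX m_gt0 f e) addnC odd_j.
Qed.

Lemma fl_nearest x : 0 <= x -> x < 2 ^+ bias E -> has (rne_ok R E m x) (reps E m) ->
  exists r, [/\ r \in reps E m, rne_ok R E m x r & fl R E m x = (fval R E m r)%:E].
Proof.
move=> x_ge0 x_lt has_ok.
have thr : 2 ^+ bias E <= ovf_thr R E m.
  have : (2 : R) ^- m.+1 <= 1 by rewrite invf_le1 ?exprn_gt0 // exprn_ege1 // ler1n.
  by move=> ?; rewrite /ovf_thr ler_peMl ?exprn_ge0 //; lra.
exists (nth (false, 0%N, 0%N) (reps E m) (find (rne_ok R E m x) (reps E m))); split.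
- by rewrite mem_nth // -has_find.
- exact: nth_find.
have ovf_x : (ovf_thr R E m <= x) = false.
  by apply/negbTE; rewrite -ltNge (lt_le_trans x_lt thr).
have x_ovf : (x <= - ovf_thr R E m) = false.
  apply/negbTE; rewrite -ltNge (lt_le_trans _ x_ge0) // oppr_lt0.
  by rewrite (lt_le_trans _ thr) ?exprn_gt0.
by rewrite /fl ovf_x x_ovf -has_find has_ok.
Qed.

Lemma fl_scaled X : (X < 2 ^ (m + 2 * bias E - 1))%N ->
  fl R E m (X%:R / scale) = ((rne m X)%:R / scale)%:E.
Proof.
move=> lt_X; have rc_in := rep_of_in (rne_index_lt lt_X).
have [||| r [r_in ok_r ->]] := @fl_nearest (X%:R / scale).
- by rewrite divr_ge0 // ltW.
- by rewrite ltr_pdivrMr // -exprD -natrX ltr_nat; congr (_ < 2 ^ _)%N: lt_X; lia.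
- by apply/hasP; exists (rep_of m (rne_index m X)); last exact: rne_ok_rep_of.
by rewrite (rne_ok_fval lt_X r_in ok_r).
Qed.

Lemma fl_div_expn X t : (t <= m + bias E - 1)%N -> (X < 2 ^ (bias E + t))%N ->
  fl R E m (X%:R / 2 ^+ t) = ((rne m X)%:R / 2 ^+ t)%:E.
Proof.
move=> le_t lt_X; set s := (m + bias E - 1 - t)%N.
have divE Y : Y%:R / 2 ^+ t = (Y * 2 ^ s)%N%:R / scale :> R.
  rewrite -(subnKC le_t) exprD natrM natrX invfM mulrACA divff ?mulr1 //.
  by rewrite expf_neq0 // pnatr_eq0.
rewrite !divE fl_scaled ?rne_mulX // (_ : m + _ - 1 = bias E + t + s)%N; last by lia.
by rewrite (expnD 2 (bias E + t)) ltn_pmul2r ?expn_gt0.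
Qed.

Lemma fl_natr X : (X < 2 ^ bias E)%N -> fl R E m X%:R = (rne m X)%:R%:E.
Proof.
move=> lt_X; have -> : (X%:R : R) = X%:R / 2 ^+ 0 by rewrite expr0 divr1.
by rewrite fl_div_expn ?addn0 // expr0 divr1.
Qed.

Lemma size_fmt01 : size (fmt01 R E m) = (2 ^ m * (2 ^ (E - 1) - 1) + 1)%N.
Proof.
have grid_top : grid m (bias E * 2 ^ m) = (2 ^ (m + bias E - 1))%N.
  by rewrite grid_expn //; congr (2 ^ _)%N; lia.
have scaleE : scale = (grid m (bias E * 2 ^ m))%:R by rewrite grid_top natrX.
set g := fun j => (grid m j)%:R / scale.
have g_inj : injective g by move=> i j /eqP; rewrite eqr_scaled => /eqP/grid_inj.
have g_top : g (bias E * 2 ^ m)%N = 1 by rewrite /g -scaleE divff ?gt_eqF.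
have g_le1 j : (g j <= 1) = (j <= bias E * 2 ^ m)%N by rewrite -g_top ler_scaled grid_leq.
have g0 : g 0%N = 0 by rewrite /g grid_small ?expn_gt0 // mul0r.
have -> : (2 ^ m * (2 ^ (E - 1) - 1) + 1 = size (map g (iota 0 (bias E * 2 ^ m).+1)))%N.
  by rewrite size_map size_iota /bias mulnC addn1.
apply/perm_size/uniq_perm; rewrite ?undup_uniq ?(map_inj_uniq g_inj) ?iota_uniq // => y.
rewrite mem_undup mem_filter; apply/andP/mapP => [[/andP [y_ge0 y_le1]] | [j]].
  case/mapP => -[[s e] f]; rewrite mem_reps => /andP [_ lt_f] y_def; rewrite /= in lt_f.
  move: y_ge0 y_le1; rewrite {y}y_def fvalE // -/(g _); case: s.
    rewrite expr1 mulN1r mulNr oppr_ge0 -/(g _) -{1}g0 /g ler_scaled.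
    rewrite grid_leq leqn0 => /eqP -> _.
    by exists 0%N; rewrite ?mem_iota // -/(g 0%N) g0 oppr0.
  by rewrite expr0 mul1r -/(g _) g_le1 => _ le_j; exists (e * 2 ^ m + f)%N; rewrite ?mem_iota.
rewrite mem_iota => /andP [_ lt_j] ->; split.
  by rewrite g_le1 -ltnS lt_j andbT divr_ge0 // ltW.
apply/mapP; exists (rep_of m j); last by rewrite fval_rep_of.
by apply: rep_of_in; rewrite mulSn; lia.
Qed.

Lemma fl_div_expn_le X l : (l < bias E)%N -> (X <= 2 ^ l)%N ->
  fl R E m (X%:R / 2 ^+ l) = ((rne m X)%:R / 2 ^+ l)%:E.
Proof.
move=> lt_l le_X; apply: fl_div_expn; first by lia.
by rewrite (leq_ltn_trans le_X) // ltn_exp2l //; lia.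
Qed.

Lemma fdiv_fl_expn i l : (l < bias E)%N -> (i < 2 ^ l)%N ->
  fdiv R E m (fl R E m i%:R) (fl R E m (2 ^+ l)) = fl R E m (i%:R / 2 ^+ l).
Proof.
move=> lt_l lt_i; have le_i := ltnW lt_i.
have lt_b X : (X <= 2 ^ l -> X < 2 ^ bias E)%N.
  by move=> le_X; rewrite (leq_ltn_trans le_X) // ltn_exp2l.
rewrite -natrX (fl_natr (lt_b _ le_i)) (fl_natr (lt_b _ (leqnn _))) rne_expn // /fdiv natrX.
by rewrite (fl_div_expn_le lt_l (rne_le_expn m_gt0 le_i)) (fl_div_expn_le lt_l le_i) rne_idem.
Qed.

End Format.

Unset Implicit Arguments.

Theorem propositionB1 (R : realType) (E m l : nat) :
  (0 < E)%N -> (0 < m)%N -> (l + 2 <= 2 ^ (E - 1))%N ->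
  let denom : R := (size (fmt01 R E m))%:R in
  let target : R :=
    if (l <= m.+1)%N then
      (2 ^ l)%:R / (2 ^ m * (2 ^ (E - 1) - 1) + 1)%:R
    else
      (2 ^ m * (l - m + 1) + 1)%:R / (2 ^ m * (2 ^ (E - 1) - 1) + 1)%:R in
  let S1 := undup [seq fl R E m (i%:R / 2 ^+ l) | i <- iota 0 (2 ^ l)] in
  let S2 := undup [seq fdiv R E m (fl R E m i%:R) (fl R E m (2 ^+ l))
                  | i <- iota 0 (2 ^ l)] in
  (size S1)%:R / denom = target /\ (size S2)%:R / denom = target.
Proof.
move=> _ m_gt0 le_l denom target S1 S2.
have lt_l : (l < bias E)%N by rewrite /bias; lia.
have bias_gt0 : (0 < bias E)%N by lia.
have S1E : S1 = undup [seq ((rne m i)%:R / 2 ^+ l)%:E | i <- iota 0 (2 ^ l)].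
  congr undup; apply/eq_in_map => i; rewrite mem_iota => /andP [_ /ltnW le_i].
  exact: fl_div_expn_le.
have S2E : S2 = S1.
  congr undup; apply/eq_in_map => i; rewrite mem_iota => /andP [_ lt_i].
  exact: fdiv_fl_expn.
rewrite S2E S1E (map_comp (fun W : nat => (W%:R / 2 ^+ l)%:E)) undup_map_inj; last first.
  by move=> a b [] /natr_div_inj; apply; rewrite expf_neq0 // pnatr_eq0.
rewrite size_map size_undup_rne // /denom size_fmt01 // /target.
by case: ifP.
Qed.
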